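(* Let $G$ be the line graph of a bipartite graph. Then $p(G)\le 2$.
   Context: The line graph of a graph $H$ has the edges of $H$ as vertices, two being adjacent iff the corresponding edges of $H$ share a vertex. A comparability graph is a graph admitting a transitive orientation. $p(G)$ is the minimum number $m$ such that $E(G)$ is the union of the edge sets of $m$ pairwise edge-disjoint comparability subgraphs of $G$. *)

(* Finite simple graphs as irreflexive symmetric relations
   on a finType. *)
From mathcomp Require Import all_boot.
Set Implicit Arguments. Unset Strict Implicit. Unset Printing Implicit Defensive.

Definition bipartite (V : finType) (h : rel V) : Prop :=
  exists c : V -> bool, forall x y, h x y -> c x != c y.

Definition is_edge (V : finType) (h : rel V) (A : {set V}) : bool :=
  [exists x, exists y, h x y && (A == [set x; y])].

Definition edge_type (V : finType) (h : rel V) := {A : {set V} | is_edge h A}.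

Definition line_adj (V : finType) (h : rel V) : rel (edge_type h) :=
  fun a b => (val a != val b) && (val a :&: val b != set0).

Definition transitive_orientation (T : finType) (e o : rel T) : Prop :=
  [/\ forall x y, o x y -> e x y,
      forall x y, e x y -> o x y || o y x,
      forall x y, o x y -> ~~ o y x
    & transitive o].

Definition comparability (T : finType) (e : rel T) : Prop :=
  exists o : rel T, transitive_orientation e o.

(* E(G) is the union of the edge sets of m pairwise edge-disjoint
   comparability subgraphs of G (subgraphs given by their edge sets,
   i.e. symmetric subrelations of e). *)
Definition comp_cover (T : finType) (e : rel T) (m : nat) : Prop :=
  exists F : 'I_m -> rel T,
    [/\ forall i, [/\ forall x y, F i x y -> e x y, symmetric (F i)
                     & comparability (F i)],
        forall i j x y, i != j -> F i x y -> ~~ F j x y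
      & forall x y, e x y -> exists i, F i x y].

Arguments line_adj {V} h.
Arguments edge_type {V} h.

From mathcomp Require Import all_boot.
Set Implicit Arguments. Unset Strict Implicit. Unset Printing Implicit Defensive.

(* Fix a proper 2-colouring c of H.  Every edge of H has exactly one endpoint
   of each colour, so two distinct edges meeting at a vertex meet at exactly
   one vertex, whose colour b is well defined.  Splitting the edges of L(H)
   by b gives two edge-disjoint subgraphs; in the colour-b one, edges of H
   are adjacent iff they have the same colour-b endpoint, so it is a disjoint
   union of cliques, and ordering each clique linearly orients it
   transitively. *)

Section ClusterGraph.

Variables (T : finType) (K : eqType) (f : T -> K).

Definition cluster_graph : rel T := fun x y => (x != y) && (f x == f y).

Lemma cluster_graph_sym : symmetric cluster_graph.
Proof. by move=> x y; rewrite /cluster_graph eq_sym [f x == _]eq_sym. Qed.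

Lemma cluster_graph_comparability : comparability cluster_graph.
Proof.
exists (fun x y => (f x == f y) && (enum_rank x < enum_rank y)); split.
- move=> x y /andP[fxy lt_xy]; rewrite /cluster_graph fxy andbT.
  by apply: contraTneq lt_xy => ->; rewrite ltnn.
- move=> x y /andP[neq_xy fxy]; rewrite fxy eq_sym fxy /=.
  case: ltngtP => // /val_inj/enum_rank_inj eq_xy.
  by rewrite eq_xy eqxx in neq_xy.
- by move=> x y /andP[_ lt_xy]; rewrite negb_and -leqNgt ltnW ?orbT.
- move=> y x z /andP[/eqP fxy lt_xy] /andP[/eqP fyz lt_yz].
  by rewrite fxy fyz eqxx (ltn_trans lt_xy lt_yz).
Qed.

End ClusterGraph.

Lemma comp_cover_fintype (T I : finType) (e : rel T) (F : I -> rel T) :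
  (forall i, [/\ forall x y, F i x y -> e x y, symmetric (F i)
                & comparability (F i)]) ->
  (forall i j x y, i != j -> F i x y -> ~~ F j x y) ->
  (forall x y, e x y -> exists i, F i x y) ->
  comp_cover e #|I|.
Proof.
move=> F_graph F_disj F_cover; exists (fun k => F (enum_val k)); split.
- by move=> k; apply: F_graph.
- by move=> k l x y neq_kl; apply: F_disj; rewrite (inj_eq enum_val_inj).
- by move=> x y /F_cover[i Fi]; exists (enum_rank i); rewrite enum_rankK.
Qed.

Section BipartiteLineGraph.

Variables (V : finType) (h : rel V) (c : V -> bool).
Hypothesis c_proper : forall x y, h x y -> c x != c y.

Lemma edge_colour_inj (e : edge_type h) (v w : V) :
  v \in val e -> w \in val e -> c v = c w -> v = w.
Proof.
case: e => /= A /existsP[x /existsP[y /andP[hxy /eqP ->]]].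
have := c_proper hxy; rewrite !inE.
by move=> ncxy /orP[]/eqP-> /orP[]/eqP-> // cxy; rewrite cxy eqxx in ncxy.
Qed.

Definition endpoint (b : bool) (e : edge_type h) : option V :=
  [pick v in val e | c v == b].

Lemma endpoint_exists (b : bool) (e : edge_type h) :
  exists2 v, v \in val e & c v = b.
Proof.
case: e => /= A /existsP[x /existsP[y /andP[hxy /eqP ->]]].
have := c_proper hxy; case: (c x =P b) => [cx _ | /eqP ncx ncxy].
  by exists x; rewrite ?set21.
by exists y; rewrite ?set22 //; move: ncx ncxy; case: b (c x) (c y) => [] [] [].
Qed.

Lemma mem_edge_endpoint (e : edge_type h) (w : V) :
  (w \in val e) = (endpoint (c w) e == Some w).
Proof.
rewrite /endpoint; case: pickP => [v /andP[ve /eqP cv] | none].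
  apply/idP/eqP => [we | [<-] //].
  by rewrite (edge_colour_inj ve we cv).
have [v ve cv] := endpoint_exists (c w) e.
by apply/negbTE; move: (none v); rewrite ve cv eqxx.
Qed.

Lemma edge_eq_endpoints (e e' : edge_type h) :
  (forall b, endpoint b e = endpoint b e') -> e = e'.
Proof.
by move=> eq_end; apply/val_inj/setP => w; rewrite !mem_edge_endpoint eq_end.
Qed.

Definition meet_at_colour (b : bool) : rel (edge_type h) :=
  cluster_graph (endpoint b).

Lemma meet_at_colour_line_adj (b : bool) (e e' : edge_type h) :
  meet_at_colour b e e' -> line_adj h e e'.
Proof.
case/andP=> neq_ee' /eqP eq_end; rewrite /line_adj (inj_eq val_inj) neq_ee'.
have [v ve cv] := endpoint_exists b e.
apply/set0Pn; exists v.
by rewrite inE ve mem_edge_endpoint cv -eq_end -cv -mem_edge_endpoint.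
Qed.

Lemma line_adj_meet_at_colour (e e' : edge_type h) :
  line_adj h e e' -> exists b, meet_at_colour b e e'.
Proof.
case/andP=> neq_ee' /set0Pn[v]; rewrite inE => /andP[ve ve'].
exists (c v); apply/andP; split; first by apply: contraNneq neq_ee' => ->.
by move: ve ve'; rewrite !mem_edge_endpoint => /eqP-> /eqP->.
Qed.

Lemma meet_at_colour_disjoint (b b' : bool) (e e' : edge_type h) :
  b != b' -> meet_at_colour b e e' -> ~~ meet_at_colour b' e e'.
Proof.
move=> neq_bb' /andP[neq_ee' /eqP eq_end]; apply/negP => /andP[_ /eqP eq_end'].
case/eqP: neq_ee'; apply: edge_eq_endpoints => a.
have [-> // | neq_ab] := eqVneq a b.
suff -> : a = b' by [].
by move: neq_ab neq_bb'; case: (a); case: (b); case: (b').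
Qed.

End BipartiteLineGraph.

Theorem theorem4 (V : finType) (h : rel V) :
  irreflexive h -> symmetric h -> bipartite h ->
  exists m, m <= 2 /\ comp_cover (line_adj h) m.
Proof.
move=> _ _ [c c_proper]; exists #|{: bool}|; split; first by rewrite card_bool.
apply: (comp_cover_fintype (F := @meet_at_colour V h c)).
- move=> b; split; [exact: meet_at_colour_line_adj | exact: cluster_graph_sym |].
  exact: cluster_graph_comparability.
- by move=> b b' e e'; apply: meet_at_colour_disjoint.
- exact: line_adj_meet_at_colour.
Qed.
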